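(* Let $\rho$, $\sigma$, $\tau$ be non-crossing partitions of sizes $k$, $\ell$, $m$ respectively. Let $I=(i(1),\dots,i(k))$ be a leftmost occurrence of $\rho$ in $\tau$, let $J=(j(1),\dots,j(\ell))$ be a topmost occurrence of $\sigma$ in $\tau$, and let $H=(h(1),\dots,h(k+\ell))$ be any occurrence of $\rho[\sigma]$ in $\tau$. Then both $(i(1),\dots,i(k),h(k+1),\dots,h(k+\ell))$ and $(h(1),\dots,h(k),j(1),\dots,j(\ell))$ are occurrences of $\rho[\sigma]$ in $\tau$. In particular, $\tau$ contains $\rho[\sigma]$ if and only if $(i(1),\dots,i(k),j(1),\dots,j(\ell))$ is an occurrence of $\rho[\sigma]$ in $\tau$.
   Context: Set partitions are written in canonical sequential form (restricted growth words: $\pi_1=1$, $\pi_{i+1}\le\max(\pi_1,\dots,\pi_i)+1$, $\pi_j$ = index of the block of $j$, blocks ordered by minima). A partition is non-crossing if it avoids $1212$, i.e. has no indices $i<j<k<l$ with $\pi_i=\pi_k<\pi_j=\pi_l$. For partitions $\rho,\sigma$, $\rho[\sigma]$ denotes the concatenation of $\rho$ with $\sigma+r$, where $r$ is the number of blocks of $\rho$ and $\sigma+r$ adds $r$ to every letter. An occurrence of $\sigma=\sigma_1\cdots\sigma_k$ in $\tau=\tau_1\cdots\tau_n$ is a sequence $1\le i(1)<\dots<i(k)\le n$ with $\tau_{i(1)}\cdots\tau_{i(k)}$ order-isomorphic to $\sigma$. It is leftmost if $i(k)$ is minimal among all occurrences, and topmost if $\tau_{i(1)}$ is maximal among all occurrences.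 If $\sigma$ is empty, the empty sequence is its unique occurrence, both leftmost and topmost. *)

From mathcomp Require Import all_boot.
Set Implicit Arguments. Unset Strict Implicit. Unset Printing Implicit Defensive.

(* Words are seq nat; positions are 0-based (position p of the paper is p-1). *)

Definition wmax (s : seq nat) : nat := foldr maxn 0 s.

(* canonical sequential form: restricted growth word with letters >= 1,
   pi_1 = 1 and pi_{i+1} <= max(pi_1..pi_i) + 1 *)
Definition is_partition (s : seq nat) : Prop :=
  forall i, i < size s -> 1 <= nth 0 s i /\ nth 0 s i <= wmax (take i s) + 1.

Definition nblocks (s : seq nat) : nat := wmax s.

(* non-crossing: avoids 1212 *)
Definition noncrossing (s : seq nat) : Prop :=
  ~ exists i j k l, [/\ i < j, j < k, k < l & l < size s] /\
      [/\ nth 0 s i = nth 0 s k, nth 0 s j = nth 0 s l & nth 0 s i < nth 0 s j].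

Definition pconcat (rho sigma : seq nat) : seq nat :=
  rho ++ map (addn (nblocks rho)) sigma.

Definition order_iso (s t : seq nat) : Prop :=
  size s = size t /\
  forall a b, a < size s -> b < size s ->
    (nth 0 s a <= nth 0 s b) = (nth 0 t a <= nth 0 t b).

Definition occurrence (sigma tau : seq nat) (I : seq nat) : Prop :=
  sorted ltn I /\ all (fun i => i < size tau) I /\
  order_iso (map (nth 0 tau) I) sigma.

Definition leftmost_occ (sigma tau I : seq nat) : Prop :=
  occurrence sigma tau I /\
  forall I', occurrence sigma tau I' -> last 0 I <= last 0 I'.

Definition topmost_occ (sigma tau J : seq nat) : Prop :=
  occurrence sigma tau J /\
  forall J', occurrence sigma tau J' ->
    nth 0 tau (head 0 J') <= nth 0 tau (head 0 J).

From mathcomp Require Import all_boot zify.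
Set Implicit Arguments. Unset Strict Implicit. Unset Printing Implicit Defensive.

(* The only property of the host partition tau that matters is a consequence
   of avoiding 1212 for restricted growth words (noncrossing_lt): if p <= h < q
   and tau_h < tau_q, then tau_p < tau_q.  Indeed, otherwise the value tau_q
   occurs at some f <= p and, by restricted growth, tau_h occurs at some g < f,
   so g < f < h < q spells 1212.

   Next, occurrence_pconcatP characterises occurrences of rho[sigma] as
   concatenations X ++ Y of an occurrence X of rho and an occurrence Y of
   sigma with every position and every value of X below those of Y.

   With this, the two exchanges are short: a leftmost occurrence I of rho
   ends no later than the rho-part of H, so noncrossing_lt lifts the values
   of I below the sigma-part of H (leftmost_exchange); dually, the first
   (i.e. smallest) value of a topmost occurrence J of sigma is at least that
   of the sigma-part of H, which forces J to start after the rho-part of H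
   (topmost_exchange). *)

Lemma wmax_ge (s : seq nat) (x : nat) : x \in s -> x <= wmax s.
Proof.
elim: s => // a s IH; rewrite in_cons /wmax /= -/(wmax s) => /orP[/eqP->|/IH].
  exact: leq_maxl.
by move/leq_trans; apply; exact: leq_maxr.
Qed.

Lemma wmax_mem (s : seq nat) : 0 < wmax s -> wmax s \in s.
Proof.
elim: s => // a s IH; rewrite in_cons /wmax /= -/(wmax s).
case: (leqP a (wmax s)) => _; last by rewrite eqxx.
by move/IH ->; rewrite orbT.
Qed.

Lemma partition_letter_pos (s : seq nat) (x : nat) :
  is_partition s -> x \in s -> 0 < x.
Proof. by move=> Ps /(nthP 0)[a ha <-]; have [] := Ps a ha. Qed.

Lemma partition_head_min (s : seq nat) (a : nat) :
  is_partition s -> a < size s -> nth 0 s 0 <= nth 0 s a.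
Proof.
move=> Ps ha; have [_] := Ps 0 (leq_ltn_trans (leq0n a) ha).
rewrite take0 => /leq_trans; apply; by have [] := Ps a ha.
Qed.

Lemma partition_letter_before (tau : seq nat) (p u : nat) :
  is_partition tau -> p < size tau -> 0 < u -> u < nth 0 tau p ->
  exists2 f, f < p & nth 0 tau f = u.
Proof.
move=> Pt; elim/ltn_ind: p u => p IH u Hp u_gt0 u_lt.
have Hw : u <= wmax (take p tau).
  by have [_] := Pt p Hp; rewrite addn1 => /(leq_trans u_lt); rewrite ltnS.
have /(nthP 0)[i] := wmax_mem (leq_trans u_gt0 Hw).
rewrite size_takel ?(ltnW Hp) // => ip; rewrite nth_take // => taui.
case: (ltngtP u (nth 0 tau i)) => [lt_u | | ->]; last by exists i.
- have [f fi <-] := IH i ip u (ltn_trans ip Hp) u_gt0 lt_u.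
  by exists f => //; exact: ltn_trans ip.
- by rewrite taui ltnNge Hw.
Qed.

Lemma noncrossing_lt (tau : seq nat) (p h q : nat) :
  is_partition tau -> noncrossing tau ->
  p <= h -> h < q -> q < size tau -> nth 0 tau h < nth 0 tau q ->
  nth 0 tau p < nth 0 tau q.
Proof.
move=> Pt NC; rewrite leq_eqVlt => /orP[/eqP-> //|ph] hq qs lt_hq.
rewrite ltnNge; apply/negP => le_qp.
have hs : h < size tau := ltn_trans hq qs.
have ps : p < size tau := ltn_trans ph hs.
have [h_gt0 _] := Pt h hs.
have [f fp tauf] : exists2 f, f <= p & nth 0 tau f = nth 0 tau q.
  move: le_qp; rewrite leq_eqVlt => /orP[/eqP->|lt_qp]; first by exists p.
  have [f /ltnW fp <-] := partition_letter_before Pt ps (leq_trans h_gt0 (ltnW lt_hq)) lt_qp.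
  by exists f.
have fs : f < size tau := leq_ltn_trans fp ps.
have [g gf taug] : exists2 g, g < f & nth 0 tau g = nth 0 tau h.
  by apply: partition_letter_before; rewrite ?tauf.
apply: NC; exists g, f, h, q; split; split; rewrite ?taug ?tauf //.
exact: leq_ltn_trans ph.
Qed.

Lemma order_iso_cat (u v r s : seq nat) :
  order_iso u r -> order_iso v s -> allrel ltn u v -> allrel ltn r s ->
  order_iso (u ++ v) (r ++ s).
Proof.
move=> [su iso_ur] [sv iso_vs] /allrelP uv /allrelP rs.
split; first by rewrite !size_cat su sv.
move=> a b; rewrite size_cat !nth_cat -su => ha hb.
have u_lt_v x y : x < size u -> y - size u < size v ->
    nth 0 u x < nth 0 v (y - size u) /\ nth 0 r x < nth 0 s (y - size u).
  by move=> hx hy; split; [apply: uv | apply: rs]; rewrite mem_nth -?su -?sv.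
case: (ltnP a (size u)) => ha'; case: (ltnP b (size u)) => hb'.
- exact: iso_ur.
- have [/ltnW -> /ltnW ->] := u_lt_v a b ha' (ltac:(lia)); done.
- by have [lt1 lt2] := u_lt_v b a hb' (ltac:(lia)); rewrite leqNgt lt1 leqNgt lt2.
- by apply: iso_vs; lia.
Qed.

Lemma order_iso_split (u v r s : seq nat) :
  size u = size r -> order_iso (u ++ v) (r ++ s) -> allrel ltn r s ->
  [/\ order_iso u r, order_iso v s & allrel ltn u v].
Proof.
move=> su [suv iso] /allrelP rs.
have sv : size v = size s by move: suv; rewrite !size_cat su => /addnI.
have shift x : nth 0 (u ++ v) (size u + x) = nth 0 v x /\
               nth 0 (r ++ s) (size u + x) = nth 0 s x.
  by rewrite !nth_cat -su ltnNge leq_addr addKn.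
split.
- split=> // a b ha hb; move: (iso a b); rewrite !nth_cat -su ha hb size_cat.
  by apply; lia.
- split=> // a b ha hb; move: (iso (size u + a) (size u + b)).
  have [-> ->] := shift a; have [-> ->] := shift b.
  by rewrite size_cat; apply; lia.
- apply/allrelP => x y /(nthP 0)[a ha <-] /(nthP 0)[b hb <-] /=.
  move: (iso (size u + b) a); have [-> ->] := shift b; rewrite !nth_cat -su ha.
  rewrite size_cat => iso_ba.
  have lt_rs : nth 0 r a < nth 0 s b by apply: rs; rewrite mem_nth -?su -?sv.
  by rewrite ltnNge iso_ba -?ltnNge ?ltn_add2l // ltn_addr.
Qed.

Lemma order_iso_shift (v s : seq nat) (N : nat) :
  order_iso v (map (addn N) s) <-> order_iso v s.
Proof.
rewrite /order_iso size_map.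
split=> -[sz iso]; split=> // a b ha hb; move: (iso a b ha hb);
  by rewrite !(nth_map 0) -?sz // leq_add2l.
Qed.

Lemma pconcat_separated (rho sigma : seq nat) :
  is_partition sigma -> allrel ltn rho (map (addn (nblocks rho)) sigma).
Proof.
move=> Ps; apply/allrelP => x _ xr /mapP[y ys ->] /=.
by rewrite -addn1 leq_add ?wmax_ge ?(partition_letter_pos Ps ys).
Qed.

Lemma sorted_ltn_cat (X Y : seq nat) :
  sorted ltn (X ++ Y) = [&& allrel ltn X Y, sorted ltn X & sorted ltn Y].
Proof. by rewrite !(sorted_pairwise ltn_trans) pairwise_cat. Qed.

Lemma sorted_ltn_head (s : seq nat) (x : nat) :
  sorted ltn s -> x \in s -> head 0 s <= x.
Proof.
case: s => // a s; rewrite (sorted_pairwise ltn_trans) /= => /andP[/allP a_lt _].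
by rewrite in_cons => /orP[/eqP-> // | /a_lt /ltnW].
Qed.

Lemma sorted_ltn_last (s : seq nat) (x : nat) :
  sorted ltn s -> x \in s -> x <= last 0 s.
Proof.
case/lastP: s => // s a; rewrite -cats1 sorted_ltn_cat last_cat /=.
case/and3P=> /allrelP lt_a _ _; rewrite mem_cat mem_seq1.
by case/orP=> [/lt_a /(_ (mem_head a _)) /ltnW | /eqP->].
Qed.

Lemma occurrence_size (sigma tau J : seq nat) :
  occurrence sigma tau J -> size J = size sigma.
Proof. by case=> _ [_ [sz _]]; rewrite size_map in sz. Qed.

(* In an occurrence of a partition, the first position carries the smallest
   value, since it matches the block 1. *)
Lemma occurrence_head_min (sigma tau J : seq nat) (y : nat) :
  is_partition sigma -> occurrence sigma tau J -> y \in J ->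
  nth 0 tau (head 0 J) <= nth 0 tau y.
Proof.
move=> Ps oJ /(nthP 0)[b hb <-]; have szJ := occurrence_size oJ.
have J_gt0 : 0 < size J := leq_ltn_trans (leq0n b) hb.
case: oJ => _ [_ [_ iso]]; move: (iso 0 b); rewrite size_map !(nth_map 0) // nth0.
move=> -> //; apply: partition_head_min => //; by rewrite -szJ.
Qed.

Lemma occurrence_pconcatP (rho sigma tau X Y : seq nat) :
  is_partition sigma -> size X = size rho ->
  occurrence (pconcat rho sigma) tau (X ++ Y) <->
  [/\ occurrence rho tau X, occurrence sigma tau Y &
      {in X & Y, forall x y, x < y /\ nth 0 tau x < nth 0 tau y}].
Proof.
move=> Ps szX; have sep := pconcat_separated rho Ps.
have values_below : allrel ltn (map (nth 0 tau) X) (map (nth 0 tau) Y) =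
    allrel (fun x y => nth 0 tau x < nth 0 tau y) X Y.
  by rewrite allrel_mapl allrel_mapr.
rewrite /occurrence /pconcat sorted_ltn_cat all_cat map_cat; split.
- case=> /and3P[/allrelP pos sX sY] [/andP[aX aY] iso].
  have szmX : size (map (nth 0 tau) X) = size rho by rewrite size_map.
  have [isoX /order_iso_shift isoY] := order_iso_split szmX iso sep.
  by rewrite values_below => /allrelP val; split=> // x y xX yY; split; [apply: pos | apply: val].
- case=> [[sX [aX isoX]] [sY [aY isoY]] below].
  have pos : allrel ltn X Y by apply/allrelP=> x y xX yY; case: (below x y xX yY).
  have val : allrel ltn (map (nth 0 tau) X) (map (nth 0 tau) Y).
    by rewrite values_below; apply/allrelP=> x y xX yY; case: (below x y xX yY).
  rewrite sX sY aX aY pos; split=> //; split=> //.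
  by apply: order_iso_cat => //; apply/order_iso_shift.
Qed.

Lemma occurrence_pconcat_split (rho sigma tau H : seq nat) :
  is_partition sigma -> occurrence (pconcat rho sigma) tau H ->
  [/\ occurrence rho tau (take (size rho) H),
      occurrence sigma tau (drop (size rho) H) &
      {in take (size rho) H & drop (size rho) H,
         forall x y, x < y /\ nth 0 tau x < nth 0 tau y}].
Proof.
move=> Ps oH; have szH := occurrence_size oH.
rewrite /pconcat size_cat size_map in szH.
by apply/occurrence_pconcatP; rewrite ?cat_take_drop // size_takel // szH leq_addr.
Qed.

Lemma leftmost_exchange (rho sigma tau I H : seq nat) :
  is_partition sigma -> is_partition tau -> noncrossing tau ->
  leftmost_occ rho tau I -> occurrence (pconcat rho sigma) tau H ->
  occurrence (pconcat rho sigma) tau (I ++ drop (size rho) H).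
Proof.
move=> Ps Pt NCt [oI leftmost] oH.
have [oX oY below] := occurrence_pconcat_split Ps oH.
set X := take (size rho) H in oX below; set Y := drop (size rho) H in oY below *.
apply/occurrence_pconcatP => //; first exact: occurrence_size oI.
split=> // x y xI yY.
have hX : last 0 X \in X.  (* X is nonempty: it is as long as I, and x \in I *)
  have : size X = size I by rewrite !(occurrence_size oX, occurrence_size oI).
  by case: (X) (I) xI => [|a X'] [|? ?] //= _ _; exact: mem_last.
have [hy val_hy] := below _ _ hX yY.
have xh : x <= last 0 X := leq_trans (sorted_ltn_last oI.1 xI) (leftmost X oX).
split; first exact: leq_ltn_trans xh hy.
by apply: noncrossing_lt xh hy _ val_hy => //; exact: (allP oY.2.1).
Qed.

Lemma topmost_exchange (rho sigma tau J H : seq nat) :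
  is_partition sigma -> is_partition tau -> noncrossing tau ->
  topmost_occ sigma tau J -> occurrence (pconcat rho sigma) tau H ->
  occurrence (pconcat rho sigma) tau (take (size rho) H ++ J).
Proof.
move=> Ps Pt NCt [oJ topmost] oH.
have [oX oY below] := occurrence_pconcat_split Ps oH.
set X := take (size rho) H in oX below *; set Y := drop (size rho) H in oY below.
apply/occurrence_pconcatP => //; first exact: occurrence_size oX.
split=> // x y xX yJ.
have hY : head 0 Y \in Y.  (* Y is nonempty: it is as long as J, and y \in J *)
  have : size Y = size J by rewrite !(occurrence_size oY, occurrence_size oJ).
  by case: (Y) (J) yJ => [|a Y'] [|? ?] //= _ _; exact: mem_head.
have [xh val_xh] := below _ _ xX hY.
have top_h : nth 0 tau (head 0 Y) <= nth 0 tau (head 0 J) := topmost Y oY.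
(* J cannot start at or before x: tau at head J would then exceed tau at
   head Y by noncrossing_lt, against topmostness. *)
have x_lt_J : x < head 0 J.
  rewrite ltnNge; apply/negP => Jx.
  have hs : head 0 Y < size tau := allP oY.2.1 _ hY.
  by move: top_h; rewrite leqNgt (noncrossing_lt Pt NCt Jx xh hs val_xh).
split; first exact: leq_trans x_lt_J (sorted_ltn_head oJ.1 yJ).
exact: leq_trans val_xh (leq_trans top_h (occurrence_head_min Ps oJ yJ)).
Qed.

Theorem lemma3p1 (rho sigma tau I J H : seq nat) :
  is_partition rho -> is_partition sigma -> is_partition tau ->
  noncrossing rho -> noncrossing sigma -> noncrossing tau ->
  leftmost_occ rho tau I -> topmost_occ sigma tau J ->
  occurrence (pconcat rho sigma) tau H ->
  [/\ occurrence (pconcat rho sigma) tau (I ++ drop (size rho) H),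
      occurrence (pconcat rho sigma) tau (take (size rho) H ++ J)
    & (exists H', occurrence (pconcat rho sigma) tau H') <->
      occurrence (pconcat rho sigma) tau (I ++ J)].
Proof.
move=> _ Ps Pt _ _ NCt leftI topJ oH.
split; [exact: leftmost_exchange oH | exact: topmost_exchange oH |].
split=> [[H' oH'] | oIJ]; last by exists (I ++ J).
have oIH' := leftmost_exchange Ps Pt NCt leftI oH'.
have := topmost_exchange Ps Pt NCt topJ oIH'.
by rewrite take_size_cat // (occurrence_size leftI.1).
Qed.
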